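(* Let $C$ be an $(n,k)$-code and $0\le d\le n-k$. Then $C$ is $\operatorname{rLD-MDS}_d(1)$ if and only if $C^\perp$ is $\operatorname{rMDS}_d(2)$.
   Context: $C$ is $(\rho,L)$ average-radius list-decodable if for every $y\in\mathbb F^n$ and every $L+1$ distinct codewords $c_0,\dots,c_L$, $\frac1{L+1}\sum_i\operatorname{wt}(y-c_i)>\rho n$. $C$ is $\operatorname{rLD-MDS}_d(L)$ if this holds with $\rho=\frac{L}{L+1}\frac{n-k-d}{n}$. For a $k'\times n$ matrix $V$ and $A_1,\dots,A_\ell\subseteq[n]$, $\mathcal G_{A_1,\dots,A_\ell}[V]$ is the block matrix whose $i$-th block row has $I_{k'}$ in the first block column and $V|_{A_i}$ (columns of $V$ in $A_i$) in block column $i+1$, zeros elsewhere. An $(n,k')$-code with generator matrix $V$ is $\operatorname{rMDS}_d(\ell)$ ($0\le d\le k'$) if $\mathcal G_{A_1,\dots,A_\ell}[V]$ has full column rank whenever $\mathcal G_{A_1,\dots,A_\ell}[W]$ has full column rank, $W$ a generic $(k'-d)\times n$ matrix (independent indeterminate entries). *)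

From HB Require Import structures.
From mathcomp Require Import all_boot all_order all_algebra.
From mathcomp Require Import fraction mpoly.
Set Implicit Arguments. Unset Strict Implicit. Unset Printing Implicit Defensive.
Import Order.TTheory GRing.Theory Num.Theory.
Local Open Scope ring_scope.

(* ---------- Codes ----------
   A linear (n,k)-code over a field F is represented by a generator matrix
   G : 'M[F]_(k,n) with linearly independent rows (row_free G); the code is
   the row space of G: c is a codeword iff (c <= G)%MS. *)

Definition codeword (F : fieldType) (k n : nat) (G : 'M[F]_(k, n)) (c : 'rV[F]_n) : Prop :=
  (c <= G)%MS.

Definition wt (F : fieldType) (n : nat) (v : 'rV[F]_n) : nat :=
  #|[set i : 'I_n | v 0 i != 0]|.

Definition avg_radius_LD (F : fieldType) (k n : nat) (G : 'M[F]_(k, n))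
    (rho : rat) (L : nat) : Prop :=
  forall (y : 'rV[F]_n) (c : 'I_(L.+1) -> 'rV[F]_n),
    injective c -> (forall i, codeword G (c i)) ->
    rho * n%:R < (\sum_(i < L.+1) wt (y - c i))%:R / (L.+1)%:R.

Definition rLD_MDS (F : fieldType) (k n : nat) (G : 'M[F]_(k, n)) (d L : nat) : Prop :=
  avg_radius_LD G ((L%:R / (L.+1)%:R) * ((n - k - d)%N%:R / n%:R) : rat) L.

(* ---------- The block matrix G_{A_1..A_l}[V] ----------
   Block rows indexed by i < l (each of height m), block columns by j < l.+1:
   block column 0 has width m, block column (lift ord0 i) has width #|A i|. *)

Definition blk_w (n m l : nat) (A : 'I_l -> {set 'I_n}) (j : 'I_l.+1) : nat :=
  if unlift ord0 j is Some i then #|A i| else m.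

Definition restr_cols (R : Type) (m n : nat) (V : 'M[R]_(m, n)) (A : {set 'I_n})
  : 'M[R]_(m, #|A|) := \matrix_(r, c) V r (enum_val c).

Definition blk (R : pzRingType) (m n l : nat) (V : 'M[R]_(m, n))
    (A : 'I_l -> {set 'I_n}) (i : 'I_l) (j : 'I_l.+1) : 'M[R]_(m, blk_w m A j) :=
  match unlift ord0 j as o
        return 'M[R]_(m, if o is Some i' then #|A i'| else m) with
  | None => 1%:M
  | Some i' => if i' == i then restr_cols V (A i') else 0
  end.

Definition GA (R : pzRingType) (m n l : nat) (V : 'M[R]_(m, n))
    (A : 'I_l -> {set 'I_n}) :
    'M[R]_(\sum_(i < l) m, \sum_(j < l.+1) blk_w m A j) :=
  \mxblock_(i < l, j < l.+1) blk V A i j.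

Definition full_col_rank (K : fieldType) (r c : nat) (M : 'M[K]_(r, c)) : Prop :=
  \rank M = c.

(* generic m x n matrix: independent indeterminates, viewed in the field of
   rational functions over F in m*n variables *)
Definition generic_mx (F : fieldType) (m n : nat) :
    'M[{fraction {mpoly F[m * n]}}]_(m, n) :=
  \matrix_(i, j) (FracField.tofrac ('X_(mxvec_index i j) : {mpoly F[m * n]})).

Definition rMDS (F : fieldType) (k' n : nat) (V : 'M[F]_(k', n)) (d l : nat) : Prop :=
  forall A : 'I_l -> {set 'I_n},
    full_col_rank (GA (generic_mx F (k' - d) n) A) ->
    full_col_rank (GA V A).

From mathcomp Require Import all_boot all_order all_algebra.
From mathcomp Require Import fraction mpoly lra.
Set Implicit Arguments. Unset Strict Implicit. Unset Printing Implicit Defensive.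
Import Order.TTheory GRing.Theory Num.Theory.
Local Open Scope ring_scope.

(* For L = 1 the average-radius condition says that two distinct codewords are
   at distance more than n - k - d (put y on one of them; conversely use the
   triangle inequality), i.e. every nonzero vector of C = ker H has weight
   more than n - k - d: any n - k - d columns of H are independent.
   On the other side, G_{A_1,A_2}[V] has full column rank exactly when A_1 and
   A_2 are disjoint and the columns of V in A_1 u A_2 are independent; for a
   generic (n - k - d) x n matrix the latter means |A_1| + |A_2| <= n - k - d.
   So rMDS_d(2) for H says again that any n - k - d columns of H are
   independent. *)

Section Supports.
Variables (K : fieldType) (n : nat).
Implicit Types (S : {set 'I_n}) (z : 'rV[K]_n).

Definition supported z S := forall j, j \notin S -> z 0 j = 0.

Definition cols_free m (V : 'M[K]_(m, n)) S :=
  forall z, supported z S -> V *m z^T = 0 -> z = 0.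

Definition sel_mx S : 'M[K]_(#|S|, n) := \matrix_(c, j) (enum_val c == j)%:R.

Definition scatter S (y : 'cV[K]_#|S|) : 'rV[K]_n := y^T *m sel_mx S.

Definition gather S z : 'cV[K]_#|S| := (restr_cols z S)^T.

Lemma restr_colsE m (V : 'M[K]_(m, n)) S : restr_cols V S = V *m (sel_mx S)^T.
Proof.
apply/matrixP => r c; rewrite !mxE (bigD1 (enum_val c)) //= !mxE eqxx mulr1.
by rewrite big1 ?addr0 // => j ne; rewrite !mxE eq_sym (negbTE ne) mulr0.
Qed.

Lemma sel_mx_mul_tr S : sel_mx S *m (sel_mx S)^T = 1%:M.
Proof.
by rewrite -restr_colsE; apply/matrixP => c c'; rewrite !mxE (inj_eq enum_val_inj).
Qed.

Lemma mulmx_scatter m (V : 'M[K]_(m, n)) S (y : 'cV_#|S|) :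
  V *m (scatter y)^T = restr_cols V S *m y.
Proof. by rewrite /scatter trmx_mul trmxK mulmxA restr_colsE. Qed.

Lemma scatterK S : cancel (@scatter S) (gather S).
Proof.
move=> y; rewrite /gather restr_colsE /scatter -mulmxA sel_mx_mul_tr mulmx1.
exact: trmxK.
Qed.

Lemma scatter0 S : scatter (0 : 'cV_#|S|) = 0 :> 'rV[K]_n.
Proof. by rewrite /scatter trmx0 mul0mx. Qed.

Lemma scatter_eq0 S (y : 'cV_#|S|) : scatter y = 0 -> y = 0.
Proof. by rewrite -(scatter0 S) => /(can_inj (@scatterK S)). Qed.

Lemma scatterE S (y : 'cV_#|S|) j :
  scatter y 0 j = \sum_c y c 0 * (enum_val c == j)%:R.
Proof. by rewrite mxE; apply: eq_bigr => c _; rewrite !mxE. Qed.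

Lemma scatter_supported S (y : 'cV_#|S|) : supported (scatter y) S.
Proof.
move=> j jS; rewrite scatterE big1 // => c _.
by case: eqP => [ej | _]; [move: jS; rewrite -ej enum_valP | rewrite mulr0].
Qed.

Lemma gatherK S z : supported z S -> scatter (gather S z) = z.
Proof.
move=> zS; apply/rowP => j.
have [jS | jS] := boolP (j \in S); last by rewrite scatter_supported // zS.
rewrite scatterE (bigD1 (enum_rank_in jS j)) //= enum_rankK_in // eqxx mulr1.
rewrite !mxE enum_rankK_in // big1 ?addr0 // => c ne.
case: eqP => [ej | _]; last by rewrite mulr0.
by case/eqP: ne; apply: enum_val_inj; rewrite enum_rankK_in.
Qed.

Lemma supported_supp z : supported z [set j | z 0 j != 0].
Proof. by move=> j; rewrite inE negbK => /eqP. Qed.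

Lemma wt_supported z S : supported z S -> (wt z <= #|S|)%N.
Proof.
move=> zS; apply/subset_leq_card/subsetP => j; rewrite inE.
by apply: contraR => /zS ->.
Qed.

Lemma wt0 : wt (0 : 'rV[K]_n) = 0%N.
Proof. by apply: eq_card0 => j; rewrite inE mxE eqxx. Qed.

Lemma wt_sub_triangle (y c0 c1 : 'rV[K]_n) :
  (wt (c1 - c0) <= wt (y - c0) + wt (y - c1))%N.
Proof.
apply: leq_trans (leq_card_setU _ _).1.
apply/subset_leq_card/subsetP => j; rewrite !inE !mxE.
apply: contraR; rewrite negb_or !negbK => /andP [/eqP h0 /eqP h1].
by rewrite -(subr0_eq h0) -(subr0_eq h1) subrr.
Qed.

Lemma cols_free_leq_wt m (V : 'M[K]_(m, n)) (w : nat) :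
  (forall S, (#|S| <= w)%N -> cols_free V S) <->
  (forall z, V *m z^T = 0 -> z != 0 -> (w < wt z)%N).
Proof.
split=> [hV z Vz | hV S hS z zS Vz].
  apply: contraNT; rewrite -leqNgt => hw.
  by rewrite (hV _ hw z) //; apply: supported_supp.
apply/eqP/negP => /negP /(hV z Vz).
by rewrite ltnNge (leq_trans (wt_supported zS)).
Qed.

End Supports.

Lemma full_col_rankP (K : fieldType) r c (M : 'M[K]_(r, c)) :
  full_col_rank M <-> forall u : 'cV_c, M *m u = 0 -> u = 0.
Proof.
rewrite /full_col_rank -mxrank_tr; split=> [rfM u Mu | kerM].
  have {}rfM : row_free M^T by rewrite /row_free rfM.
  apply: trmx_inj; apply: (row_free_inj rfM).
  by rewrite /= -trmx_mul Mu !trmx0 mul0mx.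
apply/eqP; change (row_free M^T); rewrite -kermx_eq0.
apply/eqP/row_matrixP => i; rewrite row0.
apply: trmx_inj; rewrite trmx0; apply: kerM.
have /sub_kermxP Mi := row_sub i (kermx M^T).
by apply: trmx_inj; rewrite trmx_mul trmxK Mi !trmx0.
Qed.

Lemma mxcol_eq0 (K : nmodType) p (p_ : 'I_p -> nat) n
    (B : forall i, 'M[K]_(p_ i, n)) i :
  \mxcol_j B j = 0 -> B i = 0.
Proof. by move=> B0; rewrite -(mxcolK B i) B0 submxcol0. Qed.

Section BlockMatrix.
Variables (K : fieldType) (m n l : nat) (V : 'M[K]_(m, n)) (A : 'I_l -> {set 'I_n}).

Lemma blk_w0 : blk_w m A ord0 = m.
Proof. by rewrite /blk_w unlift_none. Qed.

Lemma blk_wS i : blk_w m A (lift ord0 i) = #|A i|.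
Proof. by rewrite /blk_w liftK. Qed.

(* Abstracting [unlift ord0 j] lets the dependent matches in [blk_w] and [blk]
   reduce. *)
Lemma blk_mul_unlift_none i j (Ej : unlift ord0 j = None) (e : blk_w m A j = m)
    (D : 'cV[K]_(blk_w m A j)) :
  blk V A i j *m D = castmx (e, erefl) D.
Proof. by move: e D; rewrite /blk /blk_w Ej => e D; rewrite castmx_id mul1mx. Qed.

Lemma blk_mul_unlift_some i j i' (Ej : unlift ord0 j = Some i')
    (e : blk_w m A j = #|A i'|) (D : 'cV[K]_(blk_w m A j)) :
  blk V A i j *m D =
    if i' == i then restr_cols V (A i') *m castmx (e, erefl) D else 0.
Proof.
move: e D; rewrite /blk /blk_w Ej => e D; rewrite castmx_id.
by case: eqP => _ //; rewrite mul0mx.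
Qed.

Lemma GA_mul (D : forall j, 'cV[K]_(blk_w m A j)) :
  GA V A *m \mxcol_j D j =
  \mxcol_i (castmx (blk_w0, erefl) (D ord0)
            + restr_cols V (A i) *m castmx (blk_wS i, erefl) (D (lift ord0 i))).
Proof.
rewrite /GA mul_mxblock_mxrow; apply: eq_mxcol => i.
rewrite big_ord_recl (blk_mul_unlift_none _ (unlift_none _) blk_w0); congr (_ + _).
rewrite (bigD1 i) //= (blk_mul_unlift_some _ (liftK _ _) (blk_wS i)) eqxx.
rewrite big1 ?addr0 // => i' ne.
by rewrite (blk_mul_unlift_some _ (liftK _ _) (blk_wS i')) (negbTE ne).
Qed.

Definition blk_col (x : 'cV[K]_m) (y : forall i, 'cV[K]_#|A i|) j :
    'cV[K]_(blk_w m A j) :=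
  match unlift ord0 j as o return 'cV[K]_(if o is Some i then #|A i| else m) with
  | None => x
  | Some i => y i
  end.

Lemma blk_col_unlift_none x y j (Ej : unlift ord0 j = None) (e : blk_w m A j = m) :
  castmx (e, erefl) (blk_col x y j) = x.
Proof. by move: e; rewrite /blk_col /blk_w Ej => e; rewrite castmx_id. Qed.

Lemma blk_col_unlift_some x y j i (Ej : unlift ord0 j = Some i)
    (e : blk_w m A j = #|A i|) :
  castmx (e, erefl) (blk_col x y j) = y i.
Proof. by move: e; rewrite /blk_col /blk_w Ej => e; rewrite castmx_id. Qed.

Lemma full_col_rank_GAP :
  full_col_rank (GA V A) <->
  (forall (x : 'cV[K]_m) (y : forall i, 'cV[K]_#|A i|),
     (forall i, x + restr_cols V (A i) *m y i = 0) -> x = 0 /\ forall i, y i = 0).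
Proof.
rewrite full_col_rankP; split=> [kerGA x y xy | GAP u].
  have /kerGA Dx0 : GA V A *m \mxcol_j blk_col x y j = 0.
    rewrite GA_mul -(mxcol0 (p_ := fun=> m)); apply: eq_mxcol => i.
    rewrite (blk_col_unlift_none _ _ (unlift_none _) blk_w0).
    by rewrite (blk_col_unlift_some _ _ (liftK _ _) (blk_wS i)).
  have Dj0 j : blk_col x y j = 0 := mxcol_eq0 j Dx0.
  split.
    by rewrite -(blk_col_unlift_none x y (unlift_none _) blk_w0) Dj0 castmx_const.
  by move=> i; rewrite -(blk_col_unlift_some x y (liftK _ _) (blk_wS i)) Dj0 castmx_const.
rewrite -(submxcolK u) GA_mul => GAu.
have [x0 y0] := GAP _ _ (fun i => mxcol_eq0 i GAu).
rewrite -(mxcol0 (p_ := blk_w m A)); apply: eq_mxcol => j.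
case: (unliftP ord0 j) => [i -> | ->].
  move/(congr1 (castmx (esym (blk_wS i), esym erefl))): (y0 i).
  by rewrite castmxK castmx_const.
by move/(congr1 (castmx (esym blk_w0, esym erefl))): x0; rewrite castmxK castmx_const.
Qed.

Lemma GA_card : full_col_rank (GA V A) -> (m + \sum_i #|A i| <= \sum_(i < l) m)%N.
Proof.
move=> fcr; have := rank_leq_row (GA V A); rewrite fcr big_ord_recl blk_w0.
by rewrite (eq_bigr (fun i => #|A i|)) // => i _; rewrite blk_wS.
Qed.

Lemma GA_cols_free i : full_col_rank (GA V A) -> cols_free V (A i).
Proof.
move=> /full_col_rank_GAP GAP z zS Vz.
pose y i' : 'cV_#|A i'| := if i' == i then gather (A i') z else 0.
have Ay i' : 0 + restr_cols V (A i') *m y i' = 0.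
  rewrite add0r /y; case: eqP => [-> | _]; last exact: mulmx0.
  by rewrite -mulmx_scatter gatherK.
have [_ y0] := GAP 0 y Ay.
by rewrite -(gatherK zS); have := y0 i; rewrite /y eqxx => ->; rewrite scatter0.
Qed.

End BlockMatrix.

Lemma ord2_cases (t : 'I_2) : t = ord0 \/ t = ord_max.
Proof. by case: t => [[|[|//]] ?]; [left | right]; apply: val_inj. Qed.

Section TwoBlocks.
Variables (K : fieldType) (m n : nat) (V : 'M[K]_(m, n)) (A : 'I_2 -> {set 'I_n}).

Lemma GA2_disjoint : full_col_rank (GA V A) -> A ord0 :&: A ord_max = set0.
Proof.
move=> /full_col_rank_GAP GAP; apply/setP => j; rewrite inE in_set0.
apply/negP => /andP [j0 j1].
pose e : 'rV[K]_n := delta_mx 0 j.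
have eA t : supported e (A t).
  move=> j'; rewrite mxE; have [-> | _] := eqVneq j' j; last by rewrite andbF.
  by case: (ord2_cases t) => ->; rewrite ?j0 ?j1.
have xy t : - (V *m e^T) + restr_cols V (A t) *m gather (A t) e = 0.
  by rewrite -mulmx_scatter gatherK // addNr.
have [_ y0] := GAP _ _ xy.
have := gatherK (eA ord0); rewrite y0 scatter0 => /rowP /(_ j).
by rewrite !mxE !eqxx => /eqP; rewrite eq_sym oner_eq0.
Qed.

Lemma GA2_full_col_rank :
  A ord0 :&: A ord_max = set0 -> cols_free V (A ord0 :|: A ord_max) ->
  full_col_rank (GA V A).
Proof.
move=> A01 V_free; apply/full_col_rank_GAP => x y xy.
have Vy t : restr_cols V (A t) *m y t = - x by rewrite (addr0_eq (xy t)).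
have y01 : scatter (y ord0) = scatter (y ord_max).
  apply/eqP; rewrite -subr_eq0; apply/eqP/V_free.
    move=> j; rewrite inE negb_or => /andP [j0 j1].
    by rewrite mxE (scatter_supported _ j0) mxE (scatter_supported _ j1) oppr0 addr0.
  by rewrite linearB /= mulmxBr !mulmx_scatter !Vy subrr.
have y0 : scatter (y ord0) = 0.
  apply/rowP => j; rewrite [RHS]mxE.
  have [j0 | j0] := boolP (j \in A ord0); last exact: scatter_supported.
  have j1 : j \notin A ord_max.
    by apply/negP => j1; move: (in_set0 j); rewrite -A01 inE j0 j1.
  by rewrite y01 scatter_supported.
have {}y0 t : y t = 0.
  by apply: scatter_eq0; case: (ord2_cases t) => ->; rewrite -?y01.
by split=> //; have := xy ord0; rewrite y0 mulmx0 addr0.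
Qed.

End TwoBlocks.

Lemma generic_cols_free (F : fieldType) m n (S : {set 'I_n}) :
  (#|S| <= m)%N -> cols_free (generic_mx F m n) S.
Proof.
move=> Sm z zS Wz.
pose P : 'M[{mpoly F[m * n]}]_#|S| :=
  \matrix_(r, c) 'X_(mxvec_index (widen_ord Sm r) (enum_val c)).
have PWz : map_mx (@tofrac _) P *m gather S z = 0.
  move: Wz; rewrite -(gatherK zS) mulmx_scatter scatterK => /matrixP Wz.
  apply/matrixP => r i; have := Wz (widen_ord Sm r) i; rewrite !mxE => W0.
  by rewrite -[X in _ = X]W0; apply: eq_bigr => c _; rewrite !mxE.
(* Specializing the variable at position (r, enum_val c) to [r == c] maps [P] to 1. *)
pose E : 'M[F]_(m, n) :=
  \matrix_(i, j) \sum_(c : 'I_#|S|) ((enum_val c == j) && (i == c :> nat))%:R.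
have P1 : map_mx (meval (fun t => mxvec E 0 t)) P = 1%:M.
  apply/matrixP => r c; rewrite !mxE mevalXU mxvecE mxE.
  rewrite (bigD1 c) //= eqxx /= big1 ?addr0 // => c' ne.
  by rewrite (inj_eq enum_val_inj) (negbTE ne).
have detP : \det P != 0.
  apply: contraTneq isT => P0; have := det_map_mx (meval (fun t => mxvec E 0 t)) P.
  by rewrite P1 det1 P0 rmorph0 => /eqP; rewrite oner_eq0.
have unitP : map_mx (@tofrac _) P \in unitmx.
  by rewrite unitmxE unitfE det_map_mx tofrac_eq0.
by rewrite -(gatherK zS) -(mulKmx unitP (gather S z)) PWz mulmx0 scatter0.
Qed.

Lemma rMDS2_cols_free (F : fieldType) k n (V : 'M[F]_(k, n)) d :
  rMDS V d 2 <-> forall S : {set 'I_n}, (#|S| <= k - d)%N -> cols_free V S.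
Proof.
split=> [V_rMDS S Skd | V_free A].
  pose A (t : 'I_2) := if t == ord0 then S else set0.
  suff: cols_free V (A ord0) by rewrite /A eqxx.
  apply: GA_cols_free; apply: V_rMDS.
  apply: GA2_full_col_rank; first by rewrite /A /= setI0.
  by rewrite /A /= setU0; apply: generic_cols_free.
move=> W_fcr; have A01 := GA2_disjoint W_fcr.
have cardA := GA_card W_fcr.
have lift00 : lift ord0 ord0 = ord_max :> 'I_2 by apply: val_inj.
rewrite !big_ord_recl !big_ord0 !addn0 leq_add2l lift00 in cardA.
apply: (GA2_full_col_rank A01); apply: V_free.
by rewrite cardsU A01 cards0 subn0.
Qed.

Lemma avg_radius_LD1_min_wt (F : fieldType) k n (G : 'M[F]_(k, n)) (w : nat) :
  avg_radius_LD G (1%:R / 2%:R * (w%:R / n%:R)) 1 <->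
  (forall c, codeword G c -> c != 0 -> (w < wt c)%N).
Proof.
have n_neq0 (a b : 'rV[F]_n) : a != b -> n != 0%N.
  apply: contraNneq => n0; apply/eqP/rowP => j.
  by have := ltn_ord j; rewrite {2}n0.
have avgE (b : nat) : n != 0%N ->
    (1%:R / 2%:R * (w%:R / n%:R) * n%:R < b%:R / 2%:R :> rat) = (w < b)%N.
  move=> n0; rewrite -mulrA mulfVK ?pnatr_eq0 // mul1r -(ltr_nat rat).
  by apply/idP/idP => h; lra.
split=> [LD c Gc c0 | min_wt y c c_inj Gc].
  pose cc (t : 'I_2) := if t == ord0 then c else 0.
  have cc_inj : injective cc.
    move=> s t; rewrite /cc.
    case: (ord2_cases s) (ord2_cases t) => -> [] -> //= c_eq0;
      by rewrite c_eq0 ?eqxx in c0.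
  have Gcc t : codeword G (cc t).
    by rewrite /cc; case: eqP => _; [exact: Gc | exact: sub0mx].
  have := LD c cc cc_inj Gcc.
  rewrite big_ord_recl big_ord1 /cc /= subrr subr0 wt0 add0n avgE //.
  exact: n_neq0 c0.
have c01 : c ord0 != c (lift ord0 ord0) by rewrite (inj_eq c_inj).
rewrite big_ord_recl big_ord1 avgE; last exact: n_neq0 c01.
apply: leq_trans (wt_sub_triangle y (c ord0) (c (lift ord0 ord0))).
apply: min_wt; last by rewrite subr_eq0 eq_sym.
by apply: addmx_sub; [exact: Gc | rewrite eqmx_opp; exact: Gc].
Qed.

Lemma dual_codewordP (F : fieldType) k n (G : 'M[F]_(k, n)) (H : 'M[F]_(n - k, n)) :
  row_free G -> row_free H -> H *m G^T = 0 ->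
  forall c : 'rV_n, (c <= G)%MS <-> H *m c^T = 0.
Proof.
move=> /eqP rkG /eqP rkH HG c.
have kerH : (G :=: kermx H^T)%MS.
  have GH : (G <= kermx H^T)%MS.
    by apply/sub_kermxP; rewrite -[G]trmxK -trmx_mul HG trmx0.
  apply/eqmxP; rewrite -(mxrank_leqif_eq GH).2 mxrank_ker mxrank_tr rkH rkG.
  by rewrite subKn // -rkG rank_leq_col.
rewrite kerH; split=> [/sub_kermxP | Hc]; last apply/sub_kermxP.
  by move=> cH; apply: trmx_inj; rewrite trmx_mul trmxK cH trmx0.
by apply: trmx_inj; rewrite trmx_mul trmxK Hc trmx0.
Qed.

Theorem corollary3p10 (F : fieldType) (n k d : nat)
  (G : 'M[F]_(k, n)) (H : 'M[F]_(n - k, n)) :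
  row_free G ->
  row_free H ->
  (forall u : 'rV[F]_n, (u <= H)%MS <-> u *m G^T = 0) ->
  (d <= n - k)%N ->
  (rLD_MDS G d 1 <-> rMDS H d 2).
Proof.
move=> rfG rfH H_dual _.
have HG : H *m G^T = 0.
  by apply/row_matrixP => i; rewrite row_mul row0; apply/H_dual/row_sub.
rewrite /rLD_MDS avg_radius_LD1_min_wt rMDS2_cols_free cols_free_leq_wt.
by split=> min_wt z /(dual_codewordP rfG rfH HG z); apply: min_wt.
Qed.
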